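(* Let $G$ be a locally compact Abelian group with a fixed Haar measure $\lambda_G$, and let $\Omega\subset G$ be a measurable subset with $\lambda_G(\Omega)<\infty$. Then there is an open $\sigma$-compact subgroup $H$ of $G$ with $\Omega\subset H$ such that $$\mathcal{D}_G(\Omega)=\mathcal{D}_H(\Omega),$$ where $H$ is equipped with the Haar measure $\lambda_H:=\lambda_G|_H$.
   Context: All locally compact Abelian (LCA) groups are assumed Hausdorff, with identity $0$. A function $f:G\to\mathbb{C}$ is positive definite if $\sum_{i,j=1}^n c_i\overline{c_j} f(g_i-g_j)\ge 0$ for all $n\in\mathbb{N}$, $c_i\in\mathbb{C}$, $g_i\in G$. $P_1(G)$ denotes the set of continuous positive definite functions $f:G\to\mathbb{R}$ with $f(0)=1$. For $f:G\to\mathbb{R}$, $f_+(g):=\max\{f(g),0\}$ and $\operatorname{supp} f:=\overline{\{g\in G: f(g)\neq 0\}}$. For a LCA group $G$ with Haar measure $\lambda_G$ and $\Omega\subset G$, define $$\mathcal{G}_G(\Omega):=\{f\in P_1(G)\cap L^1(G): \operatorname{supp} f_+\subset\Omega\},\qquad \mathcal{D}_G(\Omega):=\sup_{f\in\mathcal{G}_G(\Omega)}\int_G f\,d\lambda_G,$$ with the convention that $\mathcal{D}_G(\Omega)=0$ when $\mathcal{G}_G(\Omega)$ is empty. The same definitions apply with $H$ in place of $G$. *)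

From HB Require Import structures.
From mathcomp Require Import all_boot all_order all_algebra.
From mathcomp Require Import all_classical all_reals all_analysis.
From mathcomp Require Import complex.

Set Implicit Arguments.
Unset Strict Implicit.
Unset Printing Implicit Defensive.

Import Order.TTheory GRing.Theory Num.Theory.
Import numFieldNormedType.Exports.
Local Open Scope classical_set_scope.
Local Open Scope ring_scope.

Section pointed_group.
Variable G : topologicalZmodType.
(* G viewed as a pointed type, with base point 0 (needed by the library's
   generated sigma-algebra construction). *)
Definition ptd_grp : Type := G.
HB.instance Definition _ := Choice.on ptd_grp.
HB.instance Definition _ := isPointed.Build ptd_grp 0.
End pointed_group.

Definition Borel (G : topologicalZmodType) :=
  @g_sigma_algebraType (ptd_grp G) (@open G).

(* Haar measure on an LCA group (Folland's definition): a nonzero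
   translation-invariant Radon measure on the Borel sets, i.e. finite on
   compact sets, outer regular on Borel sets, inner regular on open sets. *)
Definition haar_measure (R : realType) (G : topologicalZmodType)
    (mu : {measure set (Borel G) -> \bar R}) : Prop :=
  [/\ forall (x : G) (A : set (Borel G)), measurable A ->
        mu [set x + a | a in A] = mu A,
      forall K : set G, compact K -> (mu K < +oo)%E,
      mu [set: G] != 0%E,
      forall A : set (Borel G), measurable A ->
        mu A = ereal_inf [set mu U | U in [set U : set G | open U /\ A `<=` U]]
    & forall U : set G, open U ->
        mu U = ereal_sup [set mu K | K in [set K : set G | compact K /\ K `<=` U]]].

Definition is_subgroup (G : zmodType) (H : set G) : Prop :=
  H 0 /\ forall x y, H x -> H y -> H (x - y).

Definition sigma_compact (G : topologicalType) (H : set G) : Prop :=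
  exists K : nat -> set G, (forall n, compact (K n)) /\ H = \bigcup_n K n.

(* f (restricted to the subgroup H) is positive definite on H:
   sum_{i,j} c_i conj(c_j) f(g_i - g_j) >= 0 for all complex c_i and g_i in H.
   (In R[i], 0 <= z means z is real and nonnegative.) *)
Definition pos_def_on (R : rcfType) (G : zmodType) (H : set G) (f : G -> R) : Prop :=
  forall (n : nat) (c : 'I_n -> R[i]) (g : 'I_n -> G),
    (forall k, H (g k)) ->
    0 <= \sum_(k < n) \sum_(l < n) c k * ((c l)^*)%C * ((f (g k - g l))%:C)%C.

(* The class G_H(Omega) for an open subgroup H of G (with H = setT giving
   G_G(Omega)), where functions on H are represented by functions G -> R whose
   values outside H are irrelevant; lambda_H is mu restricted to H.
   supp f_+ is the closure in H of {g in H | f_+(g) <> 0}. *)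
Definition GG (R : realType) (G : topologicalZmodType)
    (mu : {measure set (Borel G) -> \bar R}) (H Omega : set G) : set (G -> R) :=
  [set f : G -> R |
     [/\ pos_def_on H f,
         {within H, continuous f},
         f 0 = 1,
         mu.-integrable (H : set (Borel G)) (fun x => (f x)%:E)
       & H `&` closure [set g | H g /\ Num.max (f g) 0 != 0] `<=` Omega]].

Definition DD (R : realType) (G : topologicalZmodType)
    (mu : {measure set (Borel G) -> \bar R}) (H Omega : set G) : \bar R :=
  if pselect (GG mu H Omega = set0) then 0%E
  else ereal_sup [set (\int[mu]_(x in (H : set (Borel G))) (f x)%:E)%E
                 | f in GG mu H Omega].

(* Pick an open U containing Omega with finite measure, compact sets K_n in U
   with mu(K_n) > mu(U) - 1/(n+1), and a compact neighbourhood V of 0.  The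
   subgroup H generated by V and the K_n is the increasing union of the compact
   sets D_0 = V u K_0, D_(n+1) = (D_n - D_n) u K_(n+1); it is open because it
   contains V, hence also closed.  The open set U \ H misses every K_n, so it is
   null, hence empty since a Haar measure charges nonempty open sets: Omega is
   contained in H.  Restriction to H maps G_G(Omega) into G_H(Omega) without
   decreasing the integral, as f <= 0 off Omega; extension by zero maps
   G_H(Omega) into G_G(Omega) keeping the integral, and stays positive definite
   because the quadratic form splits along the cosets of H. *)

From HB Require Import structures.
From mathcomp Require Import all_boot all_order all_algebra.
From mathcomp Require Import all_classical all_reals all_analysis.
From mathcomp Require Import complex.

Set Implicit Arguments.
Unset Strict Implicit.
Unset Printing Implicit Defensive.

Import Order.TTheory GRing.Theory Num.Theory.
Import numFieldNormedType.Exports.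
Local Open Scope classical_set_scope.
Local Open Scope ring_scope.

Section subgroup.
Variables (G : zmodType) (H : set G).
Hypothesis sH : is_subgroup H.

Lemma subgroup0 : H 0.
Proof. by case: sH. Qed.

Lemma subgroupB x y : H x -> H y -> H (x - y).
Proof. by case: sH => _; apply. Qed.

Lemma subgroupN x : H x -> H (- x).
Proof. by rewrite -sub0r; apply: subgroupB subgroup0. Qed.

Lemma subgroupD x y : H x -> H y -> H (x + y).
Proof. by move=> Hx Hy; rewrite -[y]opprK; apply/subgroupB/subgroupN. Qed.

Definition coset_rep (x : G) : G := xget 0 [set y | H (x - y)].

Lemma coset_repP x : H (x - coset_rep x).
Proof.
by apply: (@xgetI _ 0 [set y | H (x - y)] x); rewrite /= subrr; exact: subgroup0.
Qed.

Lemma eq_coset_rep x y : coset_rep x = coset_rep y <-> H (x - y).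
Proof.
split=> [exy|Hxy].
  have := subgroupB (coset_repP x) (coset_repP y).
  by rewrite exy opprB addrA subrK.
rewrite /coset_rep; congr xget; apply/seteqP; split=> z /= Hz.
  have -> : y - z = (x - z) - (x - y) by rewrite [RHS]addrC opprB addrA subrK.
  exact: subgroupB.
have -> : x - z = (x - y) + (y - z) by rewrite addrA subrK.
exact: subgroupD.
Qed.

End subgroup.

Section positive_definite_extension.
Variables (R : rcfType) (G : zmodType) (H : set G).
Hypothesis sH : is_subgroup H.

Lemma pos_def_patch (f : G -> R) :
  pos_def_on H f -> pos_def_on [set: G] (patch (fun=> 0) H f).
Proof.
move=> pdf n c g _.
pose r := coset_rep H; pose s := undup [seq r (g k) | k <- enum 'I_n].
pose h k := g k - r (g k).
pose c' a k := if r (g k) == a then c k else 0.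
have term k l : c k * (c l)^*%C * ((patch (fun=> 0) H f (g k - g l))%:C)%C =
    \sum_(a <- s) c' a k * (c' a l)^*%C * ((f (h k - h l))%:C)%C.
  have sk : r (g k) \in s by rewrite mem_undup; apply: map_f; rewrite mem_enum.
  rewrite (bigD1_seq _ sk (undup_uniq _)) /=.
  rewrite big1 ?addr0 => [|a /negbTE]; last first.
    by rewrite /c' eq_sym => ->; rewrite !mul0r.
  rewrite /c' eqxx eq_sym patchE; case: eqP => [elk|nlk].
    have Hkl : H (g k - g l) by apply/(eq_coset_rep sH).
    by rewrite mem_set // /h elk opprB addrA subrK.
  rewrite memNset ?conjc0 ?mulr0 ?mul0r // => /(eq_coset_rep sH) ekl.
  exact: nlk ekl.
rewrite (eq_bigr _ (fun k _ => eq_bigr _ (fun l _ => term k l))).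
under eq_bigr do rewrite exchange_big.
rewrite exchange_big /=; apply: sumr_ge0 => a _; apply: pdf => k.
exact: coset_repP.
Qed.
End positive_definite_extension.

Lemma translateE (G : zmodType) (a : G) (A : set G) :
  [set a + x | x in A] = [set z | A (z - a)].
Proof.
apply/seteqP; split=> [_ [x Ax <-]|z Aza]; first by rewrite /= addrC addKr.
by exists (z - a); rewrite // addrC subrK.
Qed.

Section topological_subgroup.
Variable G : topologicalZmodType.

Lemma continuous_subr (a : G) : continuous (fun z : G => z - a).
Proof.
move=> z; apply: (@continuous_comp _ _ _ (fun z => (z, a))
  (fun p : G * G => p.1 - p.2)).
  by apply: cvg_pair; [exact: cvg_id|exact: cvg_cst].
exact: sub_continuous.
Qed.

Lemma nbhs0_translate (a : G) (V : set G) :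
  nbhs 0 V -> nbhs a [set z | V (z - a)].
Proof. by move=> V0; apply: (@continuous_subr a a); rewrite /= subrr. Qed.

Lemma open_translate (a : G) (A : set G) : open A -> open [set a + x | x in A].
Proof.
by move=> oA; rewrite translateE; apply: open_comp => // z _; exact: continuous_subr.
Qed.

Lemma compact_diff (A B : set G) :
  compact A -> compact B -> compact [set x - y | x in A & y in B].
Proof.
move=> cA cB; rewrite image2E.
have -> : uncurry (fun x y : G => x - y) = fun p => p.1 - p.2.
  by apply/funext => -[].
apply: continuous_compact; last exact: compact_setX.
exact/continuous_subspaceT/sub_continuous.
Qed.

Lemma open_subgroup (H V : set G) :
  is_subgroup H -> nbhs 0 V -> V `<=` H -> open H.
Proof.
move=> sH V0 VH; rewrite openE => x Hx; apply: filterS (nbhs0_translate x V0).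
by move=> z /VH Hzx; rewrite -(subrK x z); exact: subgroupD.
Qed.

(* The complement of an open subgroup is a union of open cosets. *)
Lemma open_subgroup_closed (H : set G) : is_subgroup H -> open H -> closed H.
Proof.
move=> sH oH; rewrite -openC openE => y nHy.
have H0 : nbhs 0 H by apply: open_nbhs_nbhs; split=> //; exact: subgroup0.
apply: filterS (nbhs0_translate y H0) => z Hzy Hz; apply: nHy.
have -> : y = z - (z - y) by rewrite opprB addrC subrK.
exact: subgroupB.
Qed.

End topological_subgroup.

Section generated_subgroup.
Variables (G : zmodType) (V : set G) (K : nat -> set G).

Fixpoint gen_approx n : set G :=
  match n with
  | 0 => V `|` K 0
  | n.+1 => [set x - y | x in gen_approx n & y in gen_approx n] `|` K n.+1
  end.

Definition gen_subgroup : set G := \bigcup_n gen_approx n.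

Hypothesis V0 : V 0.

Lemma gen_approx0 n : gen_approx n 0.
Proof.
by elim: n => [|n IH] /=; [left|left; exists 0 => //; exists 0; rewrite ?subr0].
Qed.

Lemma gen_approx_nondecreasing :
  {homo gen_approx : n m / (n <= m)%N >-> n `<=` m}.
Proof.
apply: homo_leq => [A|B A C AB BC|n x Dx /=].
- exact: subset_refl.
- exact: subset_trans AB BC.
- by left; exists x => //; exists 0; rewrite ?subr0 //; exact: gen_approx0.
Qed.

Lemma is_subgroup_gen_subgroup : is_subgroup gen_subgroup.
Proof.
split=> [|x y [n _ Dx] [m _ Dy]]; first by exists 0%N => //; exact: gen_approx0.
exists (maxn n m).+1 => //=; left; exists x.
  by apply: gen_approx_nondecreasing Dx; exact: leq_maxl.
by exists y => //; apply: gen_approx_nondecreasing Dy; exact: leq_maxr.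
Qed.

Lemma sub_gen_subgroupV : V `<=` gen_subgroup.
Proof. by move=> x Vx; exists 0%N => //; left. Qed.

Lemma sub_gen_subgroupK n : K n `<=` gen_subgroup.
Proof. by move=> x Kx; exists n => //; case: n Kx => [|n] Kx; right. Qed.

End generated_subgroup.

Lemma compact_gen_approx (G : topologicalZmodType) (V : set G)
    (K : nat -> set G) :
  compact V -> (forall n, compact (K n)) -> forall n, compact (gen_approx V K n).
Proof.
move=> cV cK; elim=> [|n IH] /=; first exact: compactU.
by apply: compactU => //; exact: compact_diff.
Qed.

Section borel_sets.
Variable G : topologicalZmodType.

Lemma measurable_open (A : set G) : open A -> measurable (A : set (Borel G)).
Proof. by move=> oA; apply: sub_sigma_algebra. Qed.

Lemma measurable_closed (A : set G) : closed A -> measurable (A : set (Borel G)).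
Proof.
move=> cA; rewrite -[A]setCK; apply: measurableC.
by apply: measurable_open; rewrite openC.
Qed.

Lemma measurable_compact (A : set G) :
  hausdorff_space G -> compact A -> measurable (A : set (Borel G)).
Proof. by move=> hG cA; apply: measurable_closed; exact: compact_closed. Qed.

End borel_sets.

(* [compact_cover] is stated for pointed spaces only; point [G] at [0]. *)
Definition pointed_group (G : topologicalZmodType) : Type := G.
HB.instance Definition _ (G : topologicalZmodType) :=
  Topological.on (pointed_group G).
HB.instance Definition _ (G : topologicalZmodType) :=
  isPointed.Build (pointed_group G) 0.

Lemma compact_cover_compact (G : topologicalZmodType) (K : set G) :
  compact K -> cover_compact K.
Proof.
by move=> cK; have : @compact (pointed_group G) K by []; rewrite compact_cover.
Qed.

Lemma measure0_disjoint_inner_approx d (T : measurableType d) (R : realType)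
    (mu : {measure set T -> \bar R}) (U W : set T) (K : nat -> set T) :
  measurable U -> measurable W -> (forall n, measurable (K n)) ->
  (mu U < +oo)%E -> W `<=` U -> (forall n, K n `<=` U) ->
  (forall n, W `&` K n = set0) ->
  (forall n, mu U - (n.+1%:R^-1)%:E < mu (K n))%E ->
  mu W = 0%E.
Proof.
move=> mU mW mK muU WU KU WK0 KUn.
have Kfin n : mu (K n) \is a fin_num.
  rewrite ge0_fin_numE ?measure_ge0 //; apply: le_lt_trans muU.
  by apply: le_measure; rewrite ?inE.
have WKU n : (mu W + mu (K n) <= mu U)%E.
  rewrite -measureU //; apply: le_measure; rewrite ?inE //; first exact: measurableU.
  by move=> x [/WU|/KU].
have Wsmall n : (mu W < (n.+1%:R^-1)%:E)%E.
  rewrite -(lteD2rE _ _ (Kfin n)); apply: le_lt_trans (WKU n) _.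
  by rewrite addeC -lteBlDr.
apply/eqP; rewrite eq_le measure_ge0 andbT; apply/lee_addgt0Pr => e e0.
have [n ne] := filter_ex (near_infty_natSinv_lt (PosNum e0)).
by rewrite add0e; apply/ltW/(lt_trans (Wsmall n)); rewrite lte_fin.
Qed.

Section haar_measure.
Variables (R : realType) (G : topologicalZmodType).
Variable mu : {measure set (Borel G) -> \bar R}.
Hypotheses (hausG : hausdorff_space G) (haar : haar_measure mu).

(* A compact set is covered by finitely many translates of a nonempty open set. *)
Lemma haar_compact0 (W : set G) : open W -> W !=set0 -> mu W = 0%E ->
  forall K : set G, compact K -> mu K = 0%E.
Proof.
move=> oW [w Ww] W0 K cK; have [tr _ _ _ _] := haar.
have null_translate a : mu.-negligible [set a + x | x in W].
  exists [set a + x | x in W]; split => //.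
    by apply: measurable_open; exact: open_translate.
  by rewrite tr //; exact: measurable_open.
have [k _ | k Kk | D _ KD] :=
  @compact_cover_compact _ K cK G setT (fun k => [set (k - w) + x | x in W]).
- exact: open_translate.
- by exists k => //; exists w => //; rewrite subrK.
apply/negligibleP; first exact: measurable_compact.
apply: (@negligibleS _ (Borel G) _ mu _ K KD); rewrite /cover bigcup_fset.
by elim/big_ind: _ => //; [exact: negligible_set0|exact: (@negligibleU _ (Borel G))].
Qed.

Lemma haar_open_neq0 (W : set G) : open W -> W !=set0 -> mu W != 0%E.
Proof.
move=> oW W0; apply/eqP => muW0; have [_ _ /eqP + _ ireg] := haar; apply.
apply/eqP; rewrite eq_le measure_ge0 andbT ireg; last exact: openT.
by apply: ge_ereal_sup => _ [K [cK _] <-]; rewrite (haar_compact0 oW W0 muW0 cK).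
Qed.

Lemma compact_inner_approx (U : set G) : open U -> (mu U < +oo)%E ->
  exists K : nat -> set G, forall n,
    [/\ compact (K n), K n `<=` U & (mu U - (n.+1%:R^-1)%:E < mu (K n))%E].
Proof.
move=> oU muU; have [_ _ _ _ ireg] := haar.
suff /choice[K HK] n : exists K : set G,
    [/\ compact K, K `<=` U & (mu U - (n.+1%:R^-1)%:E < mu K)%E] by exists K.
have : (mu U - (n.+1%:R^-1)%:E < mu U)%E.
  by rewrite gte_subl ?lte_fin ?invr_gt0 // ge0_fin_numE ?measure_ge0.
by rewrite {2}ireg // => /ereal_sup_gt [_ [K [cK KU] <-]]; exists K.
Qed.

End haar_measure.

Lemma open_sigma_compact_subgroup (R : realType) (G : topologicalZmodType)
    (mu : {measure set (Borel G) -> \bar R}) (Omega : set G) :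
  hausdorff_space G -> locally_compact [set: G] -> haar_measure mu ->
  measurable (Omega : set (Borel G)) -> (mu Omega < +oo)%E ->
  exists H : set G, [/\ open H, is_subgroup H, sigma_compact H & Omega `<=` H].
Proof.
move=> hausG lcG haar mOmega finOmega; have [_ _ _ oreg _] := haar.
have [V V0 [cV _]] := lcG 0 I; rewrite withinET in V0.
have [_ [U [oU OU] <-] muU] :
    exists2 y, [set mu U | U in [set U | open U /\ Omega `<=` U]] y & (y < +oo)%E.
  by apply: ereal_inf_lt; rewrite -oreg.
have [K /all_and3[cK KU KUn]] := compact_inner_approx haar oU muU.
pose H := gen_subgroup V K.
have sH : is_subgroup H by apply: is_subgroup_gen_subgroup; exact: nbhs_singleton.
have oH : open H := open_subgroup sH V0 (@sub_gen_subgroupV _ V K).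
exists H; split=> //.
  by exists (gen_approx V K); split=> //; exact: compact_gen_approx.
have oUH : open (U `\` H).
  rewrite setDE; apply: openI => //.
  by apply: closed_openC; exact: open_subgroup_closed.
have UH0 : mu (U `\` H) = 0%E.
  apply: (measure0_disjoint_inner_approx _ _ _ muU _ KU _ KUn).
  - exact: measurable_open.
  - exact: measurable_open.
  - by move=> n; exact: measurable_compact.
  - exact: subDsetl.
  - move=> n; apply/seteqP; split=> // x [[_ nHx] Kx].
    exact: nHx (@sub_gen_subgroupK _ V K n x Kx).
move=> x /OU Ux; apply: contrapT => nHx.
have /negP[] := haar_open_neq0 hausG haar oUH (ex_intro _ x (conj Ux nHx)).
by rewrite UH0.
Qed.

Lemma continuous_patch_clopen (T U : topologicalType) (A : set T) (f g : T -> U) :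
  open A -> closed A -> {within A, continuous f} -> continuous g ->
  continuous (patch g A f).
Proof.
move=> oA cA cf cg x; case: (pselect (A x)) => Ax.
  have eqf : {near x, f =1 patch g A f}.
    by near=> y; rewrite /patch mem_set //; near: y; exact: open_nbhs_nbhs.
  rewrite /continuous_at /patch (mem_set Ax); apply: cvg_trans (near_eq_cvg eqf) _.
  by move: cf; rewrite continuous_open_subspace // => /(_ x (mem_set Ax)).
have eqg : {near x, g =1 patch g A f}.
  near=> y; rewrite /patch memNset //; near: y.
  by apply: open_nbhs_nbhs; split=> //; exact: closed_openC.
rewrite /continuous_at /patch memNset //; exact: cvg_trans (near_eq_cvg eqg) (cg x).
Unshelve. all: by end_near.
Qed.

Section open_subgroup_restriction.
Variables (R : realType) (G : topologicalZmodType).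
Variable mu : {measure set (Borel G) -> \bar R}.
Variables (H Omega : set G).
Hypotheses (sH : is_subgroup H) (oH : open H) (OmegaH : Omega `<=` H).

Let mH : measurable (H : set (Borel G)) := measurable_open oH.

Lemma GG_restrict f : GG mu [set: G] Omega f -> GG mu H Omega f.
Proof.
case=> pdf cf f0 intf suppf; split=> //.
- by move=> n c g _; exact: pdf.
- exact: continuous_subspaceW cf.
- exact: integrableS intf.
- move=> x [Hx clx]; apply: suppf; split=> //.
  by apply: closureS clx => y [].
Qed.

Lemma GG_le0_outside f : GG mu [set: G] Omega f -> forall x, ~ H x -> f x <= 0.
Proof.
case=> _ _ _ _ suppf x nHx; rewrite leNgt; apply/negP => fx0.
apply/nHx/OmegaH/suppf; split=> //; apply: subset_closure; split=> //.
by rewrite max_l ?(ltW fx0) // gt_eqF.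
Qed.

Lemma integral_le_restrict f : GG mu [set: G] Omega f ->
  (\int[mu]_(x in [set: G]) (f x)%:E <= \int[mu]_(x in H) (f x)%:E)%E.
Proof.
move=> Gf; have [_ _ _ intf _] := Gf.
have mnH : measurable (~` H : set (Borel G)) by exact: measurableC.
rewrite -(setUCr H) integral_setU //; last 2 first.
- by rewrite setUCr; exact: measurable_int intf.
- by apply/disj_setPS => x [].
apply: geeDl; rewrite -(integral0 mu (~` H)); apply: le_integral => //.
- exact: integrableS intf.
- exact: integrable0.
- by move=> x; rewrite in_setE => nHx; rewrite lee_fin; exact: GG_le0_outside.
Qed.

Lemma GG_patch f : GG mu H Omega f -> GG mu [set: G] Omega (f \_ H).
Proof.
case=> pdf cf f0 intf suppf; split.
- exact: pos_def_patch.
- apply/continuous_subspaceT/continuous_patch_clopen => //.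
    exact: open_subgroup_closed.
  exact: cst_continuous.
- by rewrite patchE mem_set //; exact: subgroup0.
- have -> : (fun x => ((f \_ H) x)%:E) = (EFin \o f) \_ H by rewrite restrict_EFin.
  exact: (integrable_mkcond _ mH).1.
- move=> x [_ clx].
  have supp_sub : [set y | [set: G] y /\ Num.max ((f \_ H) y) 0 != 0] `<=`
                  [set y | H y /\ Num.max (f y) 0 != 0].
    move=> y [_]; rewrite patchE.
    by case: ifP => [/set_mem|_]; last rewrite maxxx eqxx.
  have clHx := closureS supp_sub clx.
  apply: suppf; split=> //.
  rewrite (closure_id H).1; last exact: open_subgroup_closed.
  by apply: closureS clHx => y [].
Qed.

Lemma integral_patch f :
  (\int[mu]_(x in [set: G]) ((f \_ H) x)%:E = \int[mu]_(x in H) (f x)%:E)%E.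
Proof. by rewrite [RHS]integral_mkcond restrict_EFin. Qed.

Lemma DD_open_subgroup : DD mu [set: G] Omega = DD mu H Omega.
Proof.
rewrite /DD; case: pselect => [GG0|GGn0]; case: pselect => [HG0|HGn0] //.
- exfalso; apply: HGn0; apply/seteqP; split=> // f Hf.
  by have := GG_patch Hf; rewrite GG0.
- exfalso; apply: GGn0; apply/seteqP; split=> // f Gf.
  by have := GG_restrict Gf; rewrite HG0.
apply/eqP; rewrite eq_le; apply/andP; split; apply: ge_ereal_sup => _ [f Gf <-].
  apply: le_trans (integral_le_restrict Gf) _; apply: ereal_sup_ubound.
  by exists f => //; exact: GG_restrict.
rewrite -integral_patch; apply: ereal_sup_ubound.
by exists (f \_ H) => //; exact: GG_patch.
Qed.

End open_subgroup_restriction.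

Theorem theorem3 (R : realType) (G : topologicalZmodType)
    (hausG : hausdorff_space G) (lcG : locally_compact [set: G])
    (mu : {measure set (Borel G) -> \bar R}) (haar : haar_measure mu)
    (Omega : set G) (mOmega : measurable (Omega : set (Borel G)))
    (finOmega : (mu Omega < +oo)%E) :
  exists H : set G,
    [/\ open H, is_subgroup H, sigma_compact H, Omega `<=` H
      & DD mu [set: G] Omega = DD mu H Omega].
Proof.
have [H [oH sH sigmaH OmegaH]] :=
  open_sigma_compact_subgroup hausG lcG haar mOmega finOmega.
by exists H; split=> //; exact: DD_open_subgroup.
Qed.
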